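(* Let $k,n$ be positive integers with $k\leqslant n$, and let $X\subseteq [n]^k_<$ be either an order ideal of $[n]^k_<$ (with respect to the Bruhat order) or a matroid. Then every linear extension of $X$ is a shelling order.
   Context: $[n]:=\{1,\ldots,n\}$. $[n]^k_<$ denotes the set of $k$-element subsets of $[n]$, each identified with the increasing tuple $x=(x_1<\cdots<x_k)$ of its elements; $A+B:=(A\setminus B)\cup(B\setminus A)$. The Bruhat order on $[n]^k_<$ is: $x\leqslant y$ iff $x_i\leqslant y_i$ for all $i\in[k]$. An order ideal is a subset $X$ such that $y\in X$ and $x\leqslant y$ imply $x\in X$. $X\subseteq[n]^k_<$ is a matroid if for all $A,B\in X$ and $a\in A\setminus B$ there exists $b\in B\setminus A$ with $A+\{a,b\}\in X$. A linear extension of $X$ is a tuple $L=(L_1,\ldots,L_h)$ listing every element of $X$ exactly once such that $L_i<L_j$ in the Bruhat order implies $i<j$. A tuple $C=(C_1,\ldots,C_h)$ of pairwise distinct elements of $[n]^k_<$ is a shelling order if for all $i<j$ in $[h]$ there exists $z<j$ with $|C_z\cap C_j|=k-1$ and $C_i\cap C_j\subseteq C_z\cap C_j$. *)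

(* [n] = {1,...,n} is modelled by 'I_n = {0,...,n-1}
   (an order-preserving relabelling i |-> i+1). *)
From mathcomp Require Import all_boot.
Set Implicit Arguments. Unset Strict Implicit. Unset Printing Implicit Defensive.

Definition incr_tuple (n : nat) (x : {set 'I_n}) : seq nat :=
  sort leq [seq val i | i <- enum x].

Definition bruhat_le (n : nat) (x y : {set 'I_n}) : bool :=
  all2 leq (incr_tuple x) (incr_tuple y).

Definition bruhat_lt (n : nat) (x y : {set 'I_n}) : bool :=
  (x != y) && bruhat_le x y.

Definition ksubsets (n k : nat) (X : {set {set 'I_n}}) : Prop :=
  forall x, x \in X -> #|x| = k.

Definition order_ideal (n k : nat) (X : {set {set 'I_n}}) : Prop :=
  forall x y : {set 'I_n}, y \in X -> #|x| = k -> bruhat_le x y -> x \in X.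

Definition symdiff (n : nat) (A B : {set 'I_n}) : {set 'I_n} :=
  (A :\: B) :|: (B :\: A).

Definition is_matroid (n : nat) (X : {set {set 'I_n}}) : Prop :=
  forall A B, A \in X -> B \in X -> forall a, a \in A :\: B ->
    exists2 b, b \in B :\: A & symdiff A [set a; b] \in X.

Definition linear_extension (n : nat) (X : {set {set 'I_n}})
    (L : seq {set 'I_n}) : Prop :=
  [/\ uniq L, (forall x, x \in L = (x \in X)) &
      forall i j, i < size L -> j < size L ->
        bruhat_lt (nth set0 L i) (nth set0 L j) -> i < j].

Definition shelling_order (n k : nat) (C : seq {set 'I_n}) : Prop :=
  [/\ uniq C, (forall x, x \in C -> #|x| = k) &
      forall i j, i < j -> j < size C ->
        exists2 z, z < j &
          (#|nth set0 C z :&: nth set0 C j| = k.-1) /\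
          (nth set0 C i :&: nth set0 C j \subset nth set0 C z :&: nth set0 C j)].

From mathcomp Require Import all_boot.
From mathcomp Require Import zify.
From Stdlib Require Import Classical.
Set Implicit Arguments. Unset Strict Implicit. Unset Printing Implicit Defensive.

(* For k-sets, x <= y in the Bruhat order iff every initial segment [0, t)
   contains at least as many elements of x as of y.  Let A = L_i, B = L_j with
   i < j.  Then B is not below A, so some segment [0, t) meets A in more
   elements than B.  From this we get b in B \ A and a < b outside B with
   D = B - b + a in X: for an order ideal directly, since D <= B; for a matroid
   by first exchanging every element >= t of A \ B for an element of B (which
   keeps A ahead on [0, t)), and then exchanging some b >= t of B \ A for an
   element a < t of A \ B.  As D < B, D precedes B in L, and D :&: B = B - b
   has k - 1 elements and contains A :&: B because b is not in A. *)

Lemma count_lt_all_gt (c t : nat) (r : seq nat) :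
  all (ltn c) r -> t <= c.+1 -> count (fun v => v < t) r = 0.
Proof.
move=> /allP r_gt le_t; rewrite -(count_pred0 r); apply: eq_in_count => v /r_gt.
by move=> lt_cv /=; apply/negbTE; rewrite -leqNgt (leq_trans le_t).
Qed.

Lemma all2_leq_count (s1 s2 : seq nat) : sorted ltn s1 -> sorted ltn s2 ->
  size s1 = size s2 ->
  (forall t, count (fun v => v < t) s2 <= count (fun v => v < t) s1) ->
  all2 leq s1 s2.
Proof.
elim: s1 s2 => [|a r1 IH] [|b r2] //= s1_sorted s2_sorted [size_r] count_le.
have r1_gt := order_path_min ltn_trans s1_sorted.
have r2_gt := order_path_min ltn_trans s2_sorted.
have le_ab : a <= b.
  rewrite leqNgt; apply/negP => lt_ba; have := count_le b.+1.
  by rewrite ltnSn ltnS (leqNgt a b) lt_ba (count_lt_all_gt r1_gt) // ltnW.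
rewrite le_ab; apply: IH (path_sorted s1_sorted) (path_sorted s2_sorted) _ _ => // t.
have [le_tb | lt_bt] := leqP t b; first by rewrite (count_lt_all_gt r2_gt) // ltnW.
by have := count_le t; rewrite lt_bt (leq_ltn_trans le_ab lt_bt) !add1n ltnS.
Qed.

Section CountBelow.
Variable n : nat.
Implicit Types (A B x y : {set 'I_n}) (a b : 'I_n).

Definition below (t : nat) : {set 'I_n} := [set i : 'I_n | i < t].
Definition count_below A (t : nat) : nat := #|A :&: below t|.

Lemma sorted_incr_tuple x : sorted ltn (incr_tuple x).
Proof.
rewrite ltn_sorted_uniq_leq sort_uniq sort_sorted ?andbT; last exact: leq_total.
by rewrite map_inj_uniq ?enum_uniq //; exact: val_inj.
Qed.

Lemma size_incr_tuple x : size (incr_tuple x) = #|x|.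
Proof. by rewrite size_sort size_map cardE. Qed.

Lemma count_incr_tuple x t :
  count (fun v => v < t) (incr_tuple x) = count_below x t.
Proof.
rewrite /incr_tuple (permP (permEl (perm_sort leq _))) count_map /count_below cardE.
rewrite (perm_size (enum_setI x (below t))) size_filter.
by apply: eq_count => i; rewrite /= inE.
Qed.

Lemma bruhat_le_count x y : #|x| = #|y| ->
  (forall t, count_below y t <= count_below x t) -> bruhat_le x y.
Proof.
move=> card_xy count_le; apply: all2_leq_count; rewrite ?sorted_incr_tuple //.
  by rewrite !size_incr_tuple.
by move=> t; rewrite !count_incr_tuple.
Qed.

Lemma not_bruhat_le_count_gt x y : #|x| = #|y| -> ~~ bruhat_le x y ->
  exists t, count_below x t < count_below y t.
Proof.
move=> card_xy /negP not_le; apply: NNPP => no_t; apply: not_le.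
apply: bruhat_le_count => // t; rewrite leqNgt; apply/negP => lt_t.
by apply: no_t; exists t.
Qed.

Lemma mem_setD_lt_of_count_below A B t : count_below B t < count_below A t ->
  exists2 a, a \in A :\: B & a < t.
Proof.
move=> lt_count; have : ~~ (A :&: below t \subset B :&: below t).
  by apply: contraTN lt_count => /subset_leq_card; rewrite -leqNgt.
case/subsetPn => a; rewrite !inE => /andP[aA lt_at] /negP aB.
by exists a; rewrite // inE aA andbT; apply: contra_notN aB => ->.
Qed.

Lemma mem_setD_ge_of_count_below A B t : #|A| = #|B| ->
  count_below B t < count_below A t -> exists2 b, b \in B :\: A & t <= b.
Proof.
move=> card_AB lt_count; have : ~~ (B :\: below t \subset A :\: below t).
  apply/negP => /subset_leq_card; move: lt_count; rewrite /count_below.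
  by have := cardsID (below t) A; have := cardsID (below t) B; lia.
case/subsetPn => b; rewrite !inE -leqNgt => /andP[le_tb bB] /negP bA.
by exists b; rewrite // inE bB andbT; apply: contra_notN bA => ->; rewrite le_tb.
Qed.

Definition exchange A a b : {set 'I_n} := (A :\ a) :|: [set b].

Lemma symdiff_exchange A a b : a \in A -> b \notin A ->
  symdiff A [set a; b] = exchange A a b.
Proof.
move=> aA bA; apply/setP => z; rewrite !inE.
have [-> | za] := eqVneq z a; first by rewrite aA; case: eqVneq bA => // <-; rewrite aA.
by have [-> | zb] := eqVneq z b; rewrite /= ?(negbTE bA) ?andbF.
Qed.

Lemma card_exchange A a b : a \in A -> b \notin A -> #|exchange A a b| = #|A|.
Proof.
move=> aA bA; rewrite /exchange setUC cardsU1 (cardsD1 a A) aA !inE.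
by rewrite (negbTE bA) andbF.
Qed.

Lemma setI_exchange A a b : a \in A -> b \notin A -> exchange A a b :&: A = A :\ a.
Proof.
move=> aA bA; apply/setP => z; rewrite !inE.
by have [-> | zb] := eqVneq z b; rewrite /= ?(negbTE bA) ?andbF // orbF -andbA andbb.
Qed.

Lemma count_below_exchange A a b t : a \in A -> b \notin A ->
  count_below (exchange A a b) t + (a < t) = count_below A t + (b < t).
Proof.
move=> aA bA; rewrite /count_below (cardsD1 b (_ :&: _)) (cardsD1 a (A :&: _)).
have ba : b != a by apply: contraNneq bA => ->.
have -> : (exchange A a b :&: below t) :\ b = (A :&: below t) :\ a.
  apply/setP => z; rewrite !inE; have [-> | zb] := eqVneq z b.
    by rewrite (negbTE bA) !andbF.
  by case: (z != a); case: (z \in A).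
by rewrite !inE eqxx aA orbT /= [LHS]addnC addnA addnAC.
Qed.

Lemma bruhat_le_exchange B a b : a \in B -> b \notin B -> b < a ->
  bruhat_le (exchange B a b) B.
Proof.
move=> aB bB lt_ba; apply: bruhat_le_count; first exact: card_exchange.
move=> t; have := count_below_exchange t aB bB.
have [lt_at | le_ta] := ltnP a t; first by rewrite (ltn_trans lt_ba lt_at); lia.
by case: (b < t) => /=; lia.
Qed.

Lemma setD_exchange A B a b : b \in B -> exchange A a b :\: B = (A :\: B) :\ a.
Proof.
move=> bB; apply/setP => z; rewrite !inE.
by have [-> | zb] := eqVneq z b; rewrite ?bB ?andbF // orbF andbCA.
Qed.

End CountBelow.

Definition has_lower_exchange n (X : {set {set 'I_n}}) (A B : {set 'I_n}) : Prop :=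
  exists b, exists2 a, [/\ b \in B :\: A, a \notin B & a < b] & exchange B b a \in X.

Lemma order_ideal_lower_exchange n k (X : {set {set 'I_n}}) (A B : {set 'I_n}) t :
  ksubsets k X -> order_ideal k X -> A \in X -> B \in X ->
  count_below B t < count_below A t -> has_lower_exchange X A B.
Proof.
move=> Xk ideal AX BX lt_count.
have card_AB : #|A| = #|B| by rewrite (Xk _ AX) (Xk _ BX).
have [a aAB lt_at] := mem_setD_lt_of_count_below lt_count.
have [b bBA le_tb] := mem_setD_ge_of_count_below card_AB lt_count.
move: (aAB) (bBA); rewrite !inE => /andP[aB _] /andP[_ bB].
have lt_ab := leq_trans lt_at le_tb.
exists b; exists a => //; apply: (ideal _ B BX); last exact: bruhat_le_exchange.
by rewrite card_exchange // (Xk _ BX).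
Qed.

Lemma has_lower_exchange_exchange n (X : {set {set 'I_n}}) (A B : {set 'I_n})
    (a0 b0 : 'I_n) :
  a0 \notin B -> has_lower_exchange X (exchange A a0 b0) B -> has_lower_exchange X A B.
Proof.
move=> a0B [b [a [bBA aB lt_ab] DX]]; exists b; exists a => //; split => //.
move: bBA; rewrite !inE => /andP[b_out bB]; rewrite bB andbT.
apply: contra b_out => bA; have ba0 : b != a0 by apply: contraNneq a0B => <-.
by rewrite ba0 bA.
Qed.

Lemma matroid_lower_exchange n k (X : {set {set 'I_n}}) (A B : {set 'I_n}) t :
  ksubsets k X -> is_matroid X -> A \in X -> B \in X ->
  count_below B t < count_below A t -> has_lower_exchange X A B.
Proof.
move=> Xk matroid; have [m] := ubnP #|A :\: B|.
elim: m A => // m IH A /ltnSE le_AB_m AX BX lt_count.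
have card_AB : #|A| = #|B| by rewrite (Xk _ AX) (Xk _ BX).
case: (boolP [exists a0 in A :\: B, t <= a0]) => [|no_high].
  case/exists_inP=> a0 a0AB le_ta0.
  have [b0 b0BA] := matroid A B AX BX a0 a0AB.
  move: (a0AB) (b0BA); rewrite !inE => /andP[a0B a0A] /andP[b0A b0B].
  rewrite symdiff_exchange // => A'X; apply: (has_lower_exchange_exchange a0B).
  apply: IH A'X BX _.
    by rewrite setD_exchange //; rewrite (cardsD1 a0) a0AB add1n in le_AB_m.
  have := count_below_exchange t a0A b0A; rewrite ltnNge le_ta0 addn0 => ->.
  exact: leq_trans lt_count (leq_addr _ _).
have [b bBA le_tb] := mem_setD_ge_of_count_below card_AB lt_count.
have [a aAB] := matroid B A BX AX b bBA.
move: (aAB) (bBA); rewrite !inE => /andP[aB aA] /andP[bA bB].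
rewrite symdiff_exchange // => DX; exists b; exists a => //; split => //.
apply: leq_trans le_tb; rewrite ltnNge; apply: contra no_high => le_ta.
by apply/exists_inP; exists a.
Qed.

Lemma linear_extension_not_bruhat_le n (X : {set {set 'I_n}})
    (L : seq {set 'I_n}) i j :
  linear_extension X L -> i < j -> j < size L ->
  ~~ bruhat_le (nth set0 L j) (nth set0 L i).
Proof.
move=> [Luniq _ Lext] lt_ij lt_jL; have lt_iL := ltn_trans lt_ij lt_jL.
apply/negP => le_ji; have := Lext j i lt_jL lt_iL.
rewrite /bruhat_lt le_ji nth_uniq // andbT (gtn_eqF lt_ij) ltnNge (ltnW lt_ij).
by move/(_ isT).
Qed.

Lemma shelling_witness_of_lower_exchange n k (X : {set {set 'I_n}})
    (L : seq {set 'I_n}) (A : {set 'I_n}) j :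
  ksubsets k X -> linear_extension X L -> j < size L ->
  has_lower_exchange X A (nth set0 L j) ->
  exists2 z, z < j & #|nth set0 L z :&: nth set0 L j| = k.-1 /\
    A :&: nth set0 L j \subset nth set0 L z :&: nth set0 L j.
Proof.
set B := nth set0 L j => Xk [Luniq Lmem Lext] lt_jL [b [a [bBA aB lt_ab] DX]].
move: (bBA); rewrite !inE => /andP[bA bB].
have BX : B \in X by rewrite -Lmem mem_nth.
have DL : exchange B b a \in L by rewrite Lmem.
exists (index (exchange B b a) L).
  apply: Lext; rewrite -/B ?index_mem // nth_index //.
  rewrite /bruhat_lt bruhat_le_exchange // andbT.
  by apply: contraNneq aB => <-; rewrite !inE eqxx orbT.
rewrite nth_index // setI_exchange //; split.
  by have := cardsD1 b B; rewrite bB (Xk _ BX) add1n => ->.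
apply/subsetP => z; rewrite !inE => /andP[zA ->]; rewrite andbT.
by apply: contraNneq bA => <-.
Qed.

Theorem corollary3p5 (n k : nat) (X : {set {set 'I_n}}) :
  0 < k -> k <= n -> ksubsets k X ->
  (order_ideal k X \/ is_matroid X) ->
  forall L : seq {set 'I_n}, linear_extension X L -> shelling_order k L.
Proof.
move=> _ _ Xk ideal_or_matroid L Lext; have [Luniq Lmem _] := Lext.
split=> // [x | i j lt_ij lt_jL]; first by rewrite Lmem; exact: Xk.
have AX : nth set0 L i \in X by rewrite -Lmem mem_nth // (ltn_trans lt_ij).
have BX : nth set0 L j \in X by rewrite -Lmem mem_nth.
have card_ji : #|nth set0 L j| = #|nth set0 L i| by rewrite (Xk _ AX) (Xk _ BX).
have [t lt_count] :=
  not_bruhat_le_count_gt card_ji (linear_extension_not_bruhat_le Lext lt_ij lt_jL).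
apply: (shelling_witness_of_lower_exchange Xk Lext lt_jL).
case: ideal_or_matroid => [ideal | matroid].
- exact: order_ideal_lower_exchange Xk ideal AX BX lt_count.
- exact: matroid_lower_exchange Xk matroid AX BX lt_count.
Qed.
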